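(* Let $n\ge 1$ be an integer, let $\alpha\in[0,1)$, and let $\overrightarrow{P_n}$ be the directed path with vertex set $\{v_1,\dots,v_n\}$ and arc set $\{(v_1,v_2),(v_2,v_3),\dots,(v_{n-1},v_n)\}$. Then the singular values of $A_{\alpha}(\overrightarrow{P_n})$ are, as a multiset, $0$ (with multiplicity $1$) together with $$\sqrt{2\alpha^2-2\alpha+1+2\alpha(1-\alpha)\cos\frac{j\pi}{n}},\qquad j=1,2,\dots,n-1.$$
   Context: Digraphs are simple: a finite vertex set and a set of arcs, which are ordered pairs of distinct vertices, with no parallel arcs (a pair of opposite arcs $(u,v),(v,u)$ is allowed). For a digraph $D$ on vertices $v_1,\dots,v_n$, the adjacency matrix $A(D)=(a_{ij})$ has $a_{ij}=1$ if $(v_i,v_j)$ is an arc and $0$ otherwise; $d_i^+$ is the outdegree of $v_i$ (number of arcs with tail $v_i$), and $\Delta^+(D)=\mathrm{diag}(d_1^+,\dots,d_n^+)$. For $\alpha\in[0,1)$, $A_\alpha(D)=\alpha\Delta^+(D)+(1-\alpha)A(D)$. The singular values of a real square matrix $B$ are the nonnegative square roots of the eigenvalues of $BB^{T}$, counted with multiplicity. *)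

From HB Require Import structures.
From mathcomp Require Import all_boot all_order all_algebra.
From mathcomp Require Import reals trigo.
Set Implicit Arguments. Unset Strict Implicit. Unset Printing Implicit Defensive.
Import Order.TTheory GRing.Theory Num.Theory.
Local Open Scope ring_scope.

(* A simple digraph on vertices 'I_n (v_{i+1} <-> i) is given by its arc
   relation; arcs join distinct vertices (loopless). *)

Definition adj_mx (R : nzRingType) (n : nat) (arc : rel 'I_n) : 'M[R]_n :=
  \matrix_(i, j) (arc i j)%:R.

Definition outdeg (n : nat) (arc : rel 'I_n) (i : 'I_n) : nat :=
  #|[set j | arc i j]|.

Definition outdeg_mx (R : nzRingType) (n : nat) (arc : rel 'I_n) : 'M[R]_n :=
  diag_mx (\row_i (outdeg arc i)%:R).

Definition A_alpha (R : nzRingType) (n : nat) (alpha : R) (arc : rel 'I_n)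
  : 'M[R]_n :=
  alpha *: outdeg_mx R arc + (1 - alpha) *: adj_mx R arc.

Definition dpath_arc (n : nat) : rel 'I_n := fun i j => (i.+1 == j)%N.

(* s is the multiset of singular values of B : the eigenvalues of B B^T,
   counted with multiplicity, are the roots of its characteristic polynomial
   listed in e, and s is (as a multiset) the list of their nonnegative square
   roots. *)
Definition singular_values (R : rcfType) (n : nat) (B : 'M[R]_n) (s : seq R)
  : Prop :=
  exists e : seq R,
    char_poly (B *m B^T) = \prod_(x <- e) ('X - x%:P) /\
    perm_eq s [seq Num.sqrt x | x <- e].

From HB Require Import structures.
From mathcomp Require Import all_boot all_order all_algebra.
From mathcomp Require Import reals trigo.
From mathcomp Require Import zify ring.
Import Order.TTheory GRing.Theory Num.Theory.
Local Open Scope ring_scope.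
Set Implicit Arguments. Unset Strict Implicit. Unset Printing Implicit Defensive.

(* The matrix A = A_alpha of the directed path is upper bidiagonal (alpha on
   the diagonal, 1 - alpha above it) with a zero last row.  Hence A A^T has a
   zero last row and column, and its leading (n-1) x (n-1) block is the
   tridiagonal Toeplitz matrix T with diagonal a = alpha^2 + (1 - alpha)^2 and
   off-diagonal b = alpha (1 - alpha), so char(A A^T) = X * char(T).  Expanding
   along the last row, the characteristic polynomials p_k of these matrices
   satisfy the three-term recurrence of the Chebyshev polynomials of the second
   kind, whence p_k(a + 2 b cos t) sin t = b^k sin((k+1) t).  For t = j pi / n,
   0 < j < n, this exhibits n - 1 roots, pairwise distinct when b <> 0, so they
   are all the roots of p_(n-1); when b = 0, T is just a times the identity. *)

Definition tridiag (R : nzRingType) (d c : R) k : 'M[R]_k :=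
  \matrix_(i, j) (if (i : nat) == j then d
                  else if ((i.+1 == j) || (j.+1 == i))%N then c else 0).

Section Tridiagonal.
Variable R : nzRingType.
Implicit Types d c : R.

Lemma tridiag_offband d c k (i j : 'I_k) :
  ((i.+1 < j) || (j.+1 < i))%N -> tridiag d c k i j = 0.
Proof. by rewrite mxE => ?; do 2![case: ifP => /=; first lia]. Qed.

Lemma row'_col'_tridiag d c k :
  row' ord_max (col' ord_max (tridiag d c k.+1)) = tridiag d c k.
Proof.
by apply/matrixP => i j; rewrite !mxE /= /bump !(leqNgt k) !ltn_ord.
Qed.

End Tridiagonal.

Lemma det_tridiagSS (R : comNzRingType) (d c : R) k :
  \det (tridiag d c k.+2) =
  d * \det (tridiag d c k.+1) - c ^+ 2 * \det (tridiag d c k).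
Proof.
rewrite (expand_det_row _ ord_max) !big_ord_recr /= big1 ?add0r; last first.
  by move=> j _; rewrite tridiag_offband ?mul0r //= ltnS ltn_ord orbT.
rewrite /cofactor (row'_col'_tridiag d c k.+1).
set N := row' _ (col' _ _).
have detN : \det N = c * \det (tridiag d c k).
  rewrite (expand_det_col _ ord_max) big_ord_recr /= big1 ?add0r; last first.
    move=> i _; rewrite [N _ _]mxE [col' _ _ _ _]mxE.
    rewrite tridiag_offband ?mul0r //= /bump.
    by have := ltn_ord i; lia.
  have -> : N ord_max ord_max = c.
    by rewrite !mxE /= /bump ltnn leqnn add0n add1n (ltn_eqF (ltnSn k)) eqxx.
  congr (_ * _); rewrite /cofactor -signr_odd oddD addbb mul1r.
  congr (\det _); apply/matrixP => i j.
  by rewrite !mxE /= /bump !(leqNgt k) !ltn_ord /= !add0n ltnNge ltnW.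
rewrite detN !mxE /= !eqxx orbT (gtn_eqF (ltnSn k)).
have sg m : (-1) ^+ (m + m) = 1 :> R by rewrite -signr_odd oddD addbb.
rewrite addSn exprS !sg; ring.
Qed.

Section TridiagonalCharPoly.
Variable R : comNzRingType.
Implicit Types d c : R.

Lemma char_poly_mx_tridiag d c k :
  char_poly_mx (tridiag d c k) = tridiag ('X - d%:P) (- c%:P) k.
Proof.
apply/matrixP => i j; rewrite !mxE -val_eqE /=.
by case: eqP => _; [rewrite mulr1n | case: ifP; rewrite ?polyC0 ?subr0 ?sub0r].
Qed.

Lemma char_poly_tridiag0 d c : char_poly (tridiag d c 0) = 1.
Proof. exact: det_mx00. Qed.

Lemma char_poly_tridiag1 d c : char_poly (tridiag d c 1) = 'X - d%:P.
Proof. by rewrite /char_poly char_poly_mx_tridiag det_mx11 mxE. Qed.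

Lemma char_poly_tridiagSS d c k :
  char_poly (tridiag d c k.+2) =
  ('X - d%:P) * char_poly (tridiag d c k.+1)
  - (c ^+ 2)%:P * char_poly (tridiag d c k).
Proof.
by rewrite /char_poly !char_poly_mx_tridiag det_tridiagSS sqrrN rmorphXn.
Qed.

End TridiagonalCharPoly.

Section TridiagonalSpectrum.
Variable R : realType.
Implicit Types a b t : R.

Lemma sin_mulSS t k :
  sin (k.+2%:R * t) = 2 * cos t * sin (k.+1%:R * t) - sin (k%:R * t).
Proof.
have -> : k.+2%:R * t = k.+1%:R * t + t by rewrite -addn1 natrD mulrDl mul1r.
have -> : k%:R * t = k.+1%:R * t - t by rewrite -addn1 natrD mulrDl mul1r addrK.
rewrite sinD sinB; ring.
Qed.

Lemma sin_natmul_pi j : sin (j%:R * pi) = 0 :> R.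
Proof.
by rewrite mulr_natl -[_ *+ j]add0r (alternatingn (@sinDpi R)) sin0 mulr0.
Qed.

Lemma char_poly_tridiag_cos a b t k :
  (char_poly (tridiag a b k)).[a + 2 * b * cos t] * sin t =
  b ^+ k * sin (k.+1%:R * t).
Proof.
suff: (char_poly (tridiag a b k)).[a + 2 * b * cos t] * sin t =
        b ^+ k * sin (k.+1%:R * t) /\
      (char_poly (tridiag a b k.+1)).[a + 2 * b * cos t] * sin t =
        b ^+ k.+1 * sin (k.+2%:R * t) by case.
elim: k => [|k [IHk IHk1]].
  rewrite char_poly_tridiag0 char_poly_tridiag1 !hornerE sin_mulSS.
  rewrite !mul1r mul0r sin0.
  split=> //; ring.
split=> //; rewrite char_poly_tridiagSS !hornerE sin_mulSS.
set p1 := (char_poly (tridiag a b k.+1)).[_]; set p0 := (char_poly _).[_].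
transitivity (2 * b * cos t * (p1 * sin t) - b ^+ 2 * (p0 * sin t)); first ring.
by rewrite IHk IHk1 !exprS; ring.
Qed.

Lemma natmul_pi_div_gt0_ltpi m j :
  (0 < j < m.+1)%N -> 0 < (j%:R * pi / m.+1%:R : R) < pi.
Proof.
case/andP=> j_gt0 j_lt; rewrite divr_gt0 ?mulr_gt0 ?ltr0n ?pi_gt0 //=.
by rewrite ltr_pdivrMr ?ltr0n // mulrC ltr_pM2l ?pi_gt0 ?ltr_nat.
Qed.

Lemma cos_natmul_pi_div_inj m :
  {in iota 1 m &, injective (fun j : nat => cos (j%:R * pi / m.+1%:R) : R)}.
Proof.
move=> i j; rewrite !mem_iota !add1n => i_bd j_bd.
have /andP[i_gt0 i_ltpi] := natmul_pi_div_gt0_ltpi i_bd.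
have /andP[j_gt0 j_ltpi] := natmul_pi_div_gt0_ltpi j_bd.
move/cos_inj; rewrite !in_itv /= !ltW // => /(_ isT isT) /divIf.
rewrite pnatr_eq0 => /(_ isT) /mulIf; rewrite gt_eqF ?pi_gt0 // => /(_ isT).
by move/eqP; rewrite eqr_nat => /eqP.
Qed.

Lemma root_char_poly_tridiag a b m j : (0 < j < m.+1)%N ->
  root (char_poly (tridiag a b m)) (a + 2 * b * cos (j%:R * pi / m.+1%:R)).
Proof.
move=> j_bd; have t_bd := natmul_pi_div_gt0_ltpi j_bd.
have sin_neq0 : sin (j%:R * pi / m.+1%:R) != 0 :> R by rewrite gt_eqF ?sin_gt0_pi.
have := char_poly_tridiag_cos a b (j%:R * pi / m.+1%:R) m.
rewrite (mulrC m.+1%:R) divfK ?pnatr_eq0 // sin_natmul_pi mulr0 => /eqP.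
by rewrite mulf_eq0 (negbTE sin_neq0) orbF.
Qed.

Lemma char_poly_tridiag a b m :
  char_poly (tridiag a b m) =
  \prod_(j <- iota 1 m) ('X - (a + 2 * b * cos (j%:R * pi / m.+1%:R))%:P).
Proof.
have [->|b_neq0] := eqVneq b 0.
  under [RHS]eq_bigr do rewrite mulr0 mul0r addr0.
  rewrite char_poly_trig; last first.
    by apply/is_trig_mxP => i j lt_ij; rewrite /tridiag mxE ltn_eqF //; case: ifP.
  rewrite (eq_bigr (fun=> 'X - a%:P)) => [|i _]; last first.
    by rewrite /tridiag mxE eqxx.
  have -> : iota 1 m = index_iota 1 m.+1 by rewrite /index_iota subn1.
  by rewrite prodr_const card_ord prodr_const_nat subn1.
set rs := [seq a + 2 * b * cos (j%:R * pi / m.+1%:R) | j <- iota 1 m].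
rewrite [LHS](all_roots_prod_XsubC (rs := rs)).
- by rewrite (monicP (char_poly_monic _)) scale1r big_map.
- by rewrite size_char_poly size_map size_iota.
- apply/allP => x /mapP[j]; rewrite mem_iota add1n => j_bd ->.
  exact: root_char_poly_tridiag.
rewrite uniq_rootsE map_inj_in_uniq ?iota_uniq // => i j i_in j_in /addrI /mulfI.
by rewrite mulf_neq0 ?pnatr_eq0 // => /(_ isT) /cos_natmul_pi_div_inj; apply.
Qed.

End TridiagonalSpectrum.

Lemma char_poly_row0 (R : comNzRingType) n (M : 'M[R]_n.+1) :
  (forall j, M ord_max j = 0) ->
  char_poly M = 'X * char_poly (row' ord_max (col' ord_max M)).
Proof.
move=> M_last0; rewrite /char_poly (expand_det_row _ ord_max) big_ord_recr /=.
rewrite big1 ?add0r => [|j _]; last first.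
  by rewrite !mxE M_last0 subr0 -val_eqE /= gtn_eqF // mulr0n mul0r.
rewrite /cofactor row'_col'_char_poly_mx !mxE M_last0 eqxx subr0 mulr1n.
by rewrite -signr_odd oddD addbb mul1r.
Qed.

Lemma sum_delta_mul (R : nzRingType) n (x y : nat) : (x < n)%N ->
  \sum_(l < n) (x == l)%:R * (y == l)%:R = (x == y)%:R :> R.
Proof.
move=> x_lt; rewrite (bigD1 (Ordinal x_lt)) //= eqxx mul1r eq_sym big1 ?addr0 //.
by move=> l; rewrite -val_eqE eq_sym /= => /negbTE->; rewrite mul0r.
Qed.

Lemma outdeg_dpath n (i : 'I_n) : outdeg (@dpath_arc n) i = (i.+1 < n)%N.
Proof.
rewrite /outdeg; case: ltnP => [i_lt|i_ge].
  rewrite (_ : [set j | _] = [set Ordinal i_lt]) ?cards1 //.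
  by apply/setP => j; rewrite !inE -val_eqE eq_sym.
rewrite (_ : [set j | _] = set0) ?cards0 //.
by apply/setP => j; rewrite !inE /dpath_arc gtn_eqF // (leq_trans (ltn_ord j)).
Qed.

Section PathMatrix.
Variables (R : comNzRingType) (al : R) (m : nat).
Let A := A_alpha al (@dpath_arc m.+1).

Lemma A_alpha_dpath_last j : A ord_max j = 0.
Proof.
rewrite !mxE outdeg_dpath /= ltnn /dpath_arc gtn_eqF ?mulr0n ?mulr0 ?addr0 //.
by case: eqP; rewrite ?mulr0n mulr0.
Qed.

Lemma A_alpha_dpath_lift (i : 'I_m) l :
  A (lift ord_max i) l = al * (i == l :> nat)%:R + (1 - al) * (i.+1 == l)%:R.
Proof.
rewrite !mxE outdeg_dpath /dpath_arc -val_eqE /= /bump (leqNgt m i) ltn_ord /=.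
by rewrite ltnS ltn_ord.
Qed.

Lemma gram_A_alpha_dpath_last j : (A *m A^T) ord_max j = 0.
Proof. by rewrite mxE big1 // => l _; rewrite A_alpha_dpath_last mul0r. Qed.

Lemma row'_col'_gram_A_alpha_dpath :
  row' ord_max (col' ord_max (A *m A^T)) =
  tridiag (al ^+ 2 + (1 - al) ^+ 2) (al * (1 - al)) m.
Proof.
apply/matrixP => i j; rewrite [LHS]mxE [col' _ _ _ _]mxE mxE.
have expand (p q r s : R) :
    (al * p + (1 - al) * q) * (al * r + (1 - al) * s) =
    al * al * (p * r) + al * (1 - al) * (p * s)
    + (1 - al) * al * (q * r) + (1 - al) * (1 - al) * (q * s) by ring.
under eq_bigr do rewrite [A^T _ _]mxE !A_alpha_dpath_lift expand.
have i_lt : (i < m.+1)%N by rewrite ltnS ltnW.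
have i_ltS : (i.+1 < m.+1)%N by rewrite ltnS.
rewrite !big_split /= -!big_distrr /= !sum_delta_mul // /tridiag mxE eqSS.
have [<-|_] := eqVneq (i : nat) j.
  by rewrite (ltn_eqF (ltnSn i)) (gtn_eqF (ltnSn i)) /=; ring.
rewrite [(i : nat) == j.+1]eq_sym.
case: eqP => [<-|_]; first by rewrite (gtn_eqF (ltnW (ltnSn j.+1))) orbT /=; ring.
by case: eqP => _ /=; ring.
Qed.
End PathMatrix.

Unset Implicit Arguments.

Theorem lemma2p1 (R : realType) (n : nat) (alpha : R) :
  (1 <= n)%N -> 0 <= alpha -> alpha < 1 ->
  singular_values (A_alpha alpha (@dpath_arc n))
    (0 :: [seq Num.sqrt (2 * alpha ^+ 2 - 2 * alpha + 1
                         + 2 * alpha * (1 - alpha)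
                           * cos (j%:R * pi / n%:R))
          | j <- iota 1 n.-1]).
Proof.
case: n => [//|m] _ _ _.
exists (0 :: [seq 2 * alpha ^+ 2 - 2 * alpha + 1
                  + 2 * alpha * (1 - alpha) * cos (j%:R * pi / m.+1%:R)
             | j <- iota 1 m]).
split; last by rewrite /= sqrtr0 -map_comp.
rewrite char_poly_row0; last exact: gram_A_alpha_dpath_last.
rewrite row'_col'_gram_A_alpha_dpath char_poly_tridiag.
rewrite big_cons polyC0 subr0 big_map.
by congr (_ * _); apply: eq_bigr => j _; congr ('X - _%:P); ring.
Qed.
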